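(* Let $X\subseteq V_\Delta$ be finite such that $G_X$ is connected and $X$ has no holes. Then for all $u,v\in X$, $$2\cdot \mathrm{dist}(u,v)=\mathrm{dist}_x(u,v)+\mathrm{dist}_y(u,v)+\mathrm{dist}_z(u,v).$$
   Context: $G_\Delta=(V_\Delta,E_\Delta)$ is the infinite regular triangular grid graph; its edges are parallel to one of three axes $x,y,z$. For finite $X\subseteq V_\Delta$, $G_X$ is the subgraph of $G_\Delta$ induced by $X$; $X$ has no holes if the subgraph of $G_\Delta$ induced by $V_\Delta\setminus X$ is connected. For an axis $d\in\{x,y,z\}$, let $E_d$ be the set of edges of $G_X$ parallel to $d$; the $d$-portals are the vertex sets of the connected components of $(X,E_d)$, and $\mathrm{portal}_d(u)$ is the $d$-portal containing $u$. Two $d$-portals are adjacent if some edge of $G_X$ joins a node of one to a node of the other. The $d$-portal graph $\mathcal P_d$ has the $d$-portals as vertices, adjacent portals being joined by an edge. $\mathrm{dist}(u,v)$ is the distance between $u$ and $v$ in $G_X$, and $\mathrm{dist}_d(u,v)$ is the distance between $\mathrm{portal}_d(u)$ and $\mathrm{portal}_d(v)$ in $\mathcal P_d$. *)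

(* The triangular grid G_Delta in axial coordinates on Z*Z. *)
From Stdlib Require Import ZArith List.
Open Scope Z_scope.

Definition vertex := (Z * Z)%type.

Inductive axis := AxX | AxY | AxZ.

Definition axis_vec (d : axis) : vertex :=
  match d with AxX => (1, 0) | AxY => (0, 1) | AxZ => (1, -1) end.

Definition tri_edge (d : axis) (p q : vertex) : Prop :=
  let '(a, b) := axis_vec d in
  (fst q = fst p + a /\ snd q = snd p + b) \/
  (fst q = fst p - a /\ snd q = snd p - b).

Definition tri_adj (p q : vertex) : Prop := exists d, tri_edge d p q.

Inductive walk {A : Type} (R : A -> A -> Prop) : A -> A -> nat -> Prop :=
| walk0 : forall a, walk R a a 0
| walkS : forall a b c n, R a b -> walk R b c n -> walk R a c (S n).

Definition is_dist {A : Type} (R : A -> A -> Prop) (a b : A) (n : nat) : Prop :=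
  walk R a b n /\ forall m, walk R a b m -> (n <= m)%nat.

(* A finite vertex set X is given by a list (membership = In). *)
Definition adjX (X : list vertex) (p q : vertex) : Prop :=
  In p X /\ In q X /\ tri_adj p q.

Definition adjX_d (X : list vertex) (d : axis) (p q : vertex) : Prop :=
  In p X /\ In q X /\ tri_edge d p q.

Definition GX_connected (X : list vertex) : Prop :=
  forall u v, In u X -> In v X -> exists n, walk (adjX X) u v n.

Definition no_holes (X : list vertex) : Prop :=
  forall u v, ~ In u X -> ~ In v X ->
    exists n, walk (fun p q => ~ In p X /\ ~ In q X /\ tri_adj p q) u v n.

Definition same_portal (X : list vertex) (d : axis) (p q : vertex) : Prop :=
  In p X /\ In q X /\ exists n, walk (adjX_d X d) p q n.

Definition portal_adj (X : list vertex) (d : axis) (p q : vertex) : Prop :=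
  In p X /\ In q X /\ ~ same_portal X d p q /\
  exists p' q', same_portal X d p p' /\ same_portal X d q q' /\ adjX X p' q'.

(* Walks in P_d are represented through representative vertices; walks
   starting anywhere in portal_d(u) and ending anywhere in portal_d(v). *)
Definition portal_walk (X : list vertex) (d : axis) (u v : vertex) (n : nat) : Prop :=
  exists u' v', same_portal X d u u' /\ same_portal X d v v' /\
                walk (portal_adj X d) u' v' n.

Definition is_portal_dist (X : list vertex) (d : axis) (u v : vertex) (n : nat) : Prop :=
  portal_walk X d u v n /\ forall m, portal_walk X d u v m -> (n <= m)%nat.

(* Fix v and an axis d, and let h(u) be the distance in the portal graph from the
   d-portal of u to that of v. Along a shortest path from u to v, a step parallel to d
   stays in its portal and every other step decreases h by exactly one; since each step
   is parallel to exactly one axis, summing over the three axes counts every step twice.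

   A step between different portals changes h by one, as adjacent portals lie on
   adjacent lines. Suppose a step u u' of a shortest path increased h. Let c be the
   first vertex of the path after u' outside the portal P of u'; by induction on the
   length of the path the step into c decreases h, so u and c are neighbours of P that
   are closer to v. Such neighbours lie in a common portal, and the straight segment
   from u to c inside it shortens the path.

   Two neighbours of P closer to v are joined by a walk avoiding P, so it suffices to
   show that a walk leaving P and coming back without meeting P leaves from and returns
   to a common portal. This is a discrete Jordan curve theorem. As X has no holes, a
   vertex g outside X can be moved to infinity outside X, which does not change the
   parity of the number of crossings of a closed walk in X with a half-line issued from
   g. If the excursion stays below the line of P and its ends lie in different portals,
   these lie on the line just below P with a vertex g outside X between them, and the
   closed walk formed with P crosses the half-line from g through P exactly once.
   Excursions reaching above the line of P are reduced to this case by induction on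
   their highest line. *)

From Stdlib Require Import ZArith List Lia Bool Classical ClassicalEpsilon Wf_nat.
Import ListNotations.
Open Scope Z_scope.

(* For the axis d, [line d p] indexes the d-line through p and [pos d p] is the
   position of p along it. *)
Definition line (d : axis) (p : vertex) : Z :=
  match d with AxX => snd p | AxY => fst p | AxZ => fst p + snd p end.

Definition pos (d : axis) (p : vertex) : Z :=
  match d with AxX => - fst p | AxY => - snd p | AxZ => snd p end.

Definition vertex_at (d : axis) (l k : Z) : vertex :=
  match d with AxX => (- k, l) | AxY => (l, - k) | AxZ => (l - k, k) end.

Lemma line_vertex_at d l k : line d (vertex_at d l k) = l.
Proof. destruct d; simpl; lia. Qed.

Lemma pos_vertex_at d l k : pos d (vertex_at d l k) = k.
Proof. destruct d; simpl; lia. Qed.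

Lemma vertex_at_coords d p : vertex_at d (line d p) (pos d p) = p.
Proof. destruct d, p; simpl; f_equal; lia. Qed.

Lemma vertex_eq_coords d p q : line d p = line d q -> pos d p = pos d q -> p = q.
Proof.
  intros El Ep. rewrite <- (vertex_at_coords d p), <- (vertex_at_coords d q), El, Ep.
  reflexivity.
Qed.

Definition step_offset (dl dp : Z) : Prop :=
  (dl = 0 /\ (dp = 1 \/ dp = -1)) \/
  (dl = 1 /\ (dp = 0 \/ dp = 1)) \/
  (dl = -1 /\ (dp = 0 \/ dp = -1)).

Lemma tri_adj_offset d p q :
  tri_adj p q -> step_offset (line d q - line d p) (pos d q - pos d p).
Proof.
  destruct p, q; intros [e He]; destruct e, d; unfold tri_edge, step_offset in *;
    simpl in *; lia.
Qed.

Lemma tri_edge_iff d p q :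
  tri_edge d p q <-> line d q = line d p /\ (pos d q - pos d p = 1 \/ pos d q - pos d p = -1).
Proof. destruct p, q, d; unfold tri_edge; simpl; lia. Qed.

Lemma tri_edge_other_axis e d p q :
  tri_edge e p q -> e <> d -> line d q - line d p = 1 \/ line d q - line d p = -1.
Proof.
  destruct p, q, e, d; unfold tri_edge; simpl; intros; try congruence; lia.
Qed.

Lemma tri_adj_same_line d p q : tri_adj p q -> line d p = line d q -> tri_edge d p q.
Proof.
  intros Ha El. apply tri_edge_iff. pose proof (tri_adj_offset d p q Ha).
  unfold step_offset in *; lia.
Qed.

Lemma tri_edge_sym d p q : tri_edge d p q -> tri_edge d q p.
Proof. rewrite !tri_edge_iff; lia. Qed.

Lemma tri_adj_sym p q : tri_adj p q -> tri_adj q p.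
Proof. intros [e He]; exists e; apply tri_edge_sym; exact He. Qed.

Section Walks.
Context {A : Type}.
Implicit Types (R : A -> A -> Prop) (x y z : A) (p : list A).

Lemma walk_trans R x y z n m : walk R x y n -> walk R y z m -> walk R x z (n + m).
Proof. induction 1; intros; simpl; [|econstructor]; eauto. Qed.

Lemma walk_rcons R x y z n : walk R x y n -> R y z -> walk R x z (S n).
Proof.
  intros W Ryz. rewrite <- Nat.add_1_r. apply (walk_trans _ _ _ _ _ _ W).
  econstructor; [exact Ryz | constructor].
Qed.

Lemma walk_sym R x y n : (forall a b, R a b -> R b a) -> walk R x y n -> walk R y x n.
Proof. intros Rsym; induction 1; [constructor | eapply walk_rcons; eauto]. Qed.

Lemma walk_impl R R' x y n : (forall a b, R a b -> R' a b) -> walk R x y n -> walk R' x y n.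
Proof. intros HR; induction 1; econstructor; eauto. Qed.

Fixpoint path R x p : Prop :=
  match p with [] => True | y :: p' => R x y /\ path R y p' end.

Definition path_end x p : A := fold_left (fun _ y => y) p x.

Lemma path_end_cat x p q : path_end x (p ++ q) = path_end (path_end x p) q.
Proof. apply fold_left_app. Qed.

Lemma path_cat R x p q : path R x (p ++ q) <-> path R x p /\ path R (path_end x p) q.
Proof.
  revert x; induction p as [|y p IH]; intros x; simpl; [tauto|].
  rewrite IH; tauto.
Qed.

Lemma path_impl R R' x p : (forall a b, R a b -> R' a b) -> path R x p -> path R' x p.
Proof. revert x; induction p; simpl; intuition. Qed.

Lemma path_end_in x p : In (path_end x p) (x :: p).
Proof.
  revert x; induction p as [|y p IH]; intros x; simpl; [auto|].
  destruct (IH y); auto.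
Qed.

Lemma path_inv R (P : A -> Prop) x p :
  (forall a b, P a -> R a b -> P b) -> P x -> path R x p -> forall z, In z p -> P z.
Proof.
  intros HP; revert x; induction p as [|y p IH]; intros x Px Hp z Hz; [destruct Hz|].
  destruct Hp as [Rxy Hp], Hz as [<-|Hz]; eauto.
Qed.

Lemma path_restrict R (P : A -> Prop) x p :
  P x -> (forall z, In z p -> P z) -> path R x p -> path (fun a b => R a b /\ P a /\ P b) x p.
Proof.
  revert x; induction p as [|y p IH]; intros x Px Hin Hp; simpl in *; [auto|].
  destruct Hp as [Rxy Hp]. repeat split; auto.
Qed.

Lemma walk_iff_path R x y n :
  walk R x y n <-> exists p, path R x p /\ path_end x p = y /\ length p = n.
Proof.
  split.
  - induction 1 as [a|a b c n Rab _ [p (Hp & Ep & Lp)]].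
    + exists []; simpl; auto.
    + exists (b :: p); simpl; auto.
  - intros (p & Hp & <- & <-). revert x Hp.
    induction p as [|b p IH]; intros x Hp; simpl in *; [constructor|].
    econstructor; [apply Hp | apply IH, Hp].
Qed.

Lemma split_first (P : A -> Prop) l y :
  In y l -> P y -> exists l1 u r, l = l1 ++ u :: r /\ P u /\ forall z, In z l1 -> ~ P z.
Proof.
  induction l as [|x l IH]; intros Hy Py; [destruct Hy|].
  destruct (classic (P x)) as [Px|Px]; [exists [], x, l; simpl; tauto|].
  destruct Hy as [->|Hy]; [contradiction|].
  destruct (IH Hy Py) as (l1 & u & r & -> & Pu & Hl1).
  exists (x :: l1), u, r; split; [reflexivity|]; split; [auto|].
  intros z [<-|Hz]; auto.
Qed.

Lemma split_last (P : A -> Prop) u r :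
  P u -> exists B l2, r = B ++ l2 /\ P (path_end u B) /\ forall z, In z l2 -> ~ P z.
Proof.
  intros Pu. induction r as [|x r IH] using rev_ind; [exists [], []; simpl; tauto|].
  destruct (classic (P x)) as [Px|Px].
  - exists (r ++ [x]), []. rewrite app_nil_r, path_end_cat. simpl; tauto.
  - destruct IH as (B & l2 & -> & PB & Hl2). exists B, (l2 ++ [x]).
    rewrite app_assoc. repeat split; auto.
    intros z Hz. apply in_app_or in Hz as [Hz|[<-|[]]]; auto.
Qed.

Lemma split_first_last (P : A -> Prop) l y :
  In y l -> P y ->
  exists l1 u B l2, l = l1 ++ u :: B ++ l2 /\ P u /\ P (path_end u B) /\
    (forall z, In z l1 -> ~ P z) /\ (forall z, In z l2 -> ~ P z).
Proof.
  intros Hy Py. destruct (split_first P l y Hy Py) as (l1 & u & r & -> & Pu & Hl1).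
  destruct (split_last P u r Pu) as (B & l2 & -> & PB & Hl2).
  exists l1, u, B, l2; auto.
Qed.

Fixpoint sum_steps (f : A -> A -> nat) x p : nat :=
  match p with [] => 0%nat | y :: p' => (f x y + sum_steps f y p')%nat end.

Lemma sum_steps_cat f x p q :
  sum_steps f x (p ++ q) = (sum_steps f x p + sum_steps f (path_end x p) q)%nat.
Proof. revert x; induction p as [|y p IH]; intros x; simpl; [|rewrite IH]; lia. Qed.

Lemma sum_steps_zero R f x p :
  (forall a b, R a b -> f a b = 0%nat) -> path R x p -> sum_steps f x p = 0%nat.
Proof.
  intros Hf; revert x; induction p as [|y p IH]; intros x Hp; simpl in *; [auto|].
  destruct Hp as [Rxy Hp]. rewrite Hf, IH; auto.
Qed.

Lemma sum_steps_add f g x p :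
  sum_steps (fun a b => f a b + g a b)%nat x p = (sum_steps f x p + sum_steps g x p)%nat.
Proof. revert x; induction p as [|y p IH]; intros x; simpl; [|rewrite IH]; lia. Qed.

Lemma sum_steps_even_ext R f g x p :
  (forall a b, R a b -> Nat.even (f a b) = Nat.even (g a b)) -> path R x p ->
  Nat.even (sum_steps f x p) = Nat.even (sum_steps g x p).
Proof.
  intros Hfg; revert x; induction p as [|y p IH]; intros x Hp; simpl; [auto|].
  destruct Hp as [Rxy Hp]. rewrite !Nat.even_add, Hfg, IH; auto.
Qed.

Definition switches (H : A -> bool) x y : nat := if Bool.eqb (H x) (H y) then 0 else 1.

Lemma even_switches H x y : Nat.even (switches H x y) = Bool.eqb (H x) (H y).
Proof. unfold switches; destruct (Bool.eqb (H x) (H y)); reflexivity. Qed.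

Lemma sum_switches_even H x p :
  Nat.even (sum_steps (switches H) x p) = Bool.eqb (H x) (H (path_end x p)).
Proof.
  revert x; induction p as [|y p IH]; intros x; simpl.
  - destruct (H x); reflexivity.
  - rewrite Nat.even_add, IH, even_switches.
    destruct (H x), (H y), (H (path_end y p)); reflexivity.
Qed.

Lemma list_bound (f : A -> Z) (l : list A) : exists N, forall z, In z l -> f z < N.
Proof.
  induction l as [|y l [N HN]]; [exists 0; intros z []|].
  exists (Z.max N (f y + 1)); intros z [<-|Hz]; [|specialize (HN z Hz)]; lia.
Qed.

End Walks.

Lemma adjX_sym X p q : adjX X p q -> adjX X q p.
Proof. intros (Hp & Hq & H); repeat split; auto using tri_adj_sym. Qed.

Lemma adjX_path_in X x p : path (adjX X) x p -> forall z, In z p -> In z X.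
Proof.
  revert x; induction p as [|y p IH]; intros x Hp z Hz; [destruct Hz|].
  destruct Hp as [(_ & Hy & _) Hp], Hz as [<-|Hz]; eauto.
Qed.

Section Portals.
Variables (X : list vertex) (d : axis).
Local Notation sp := (same_portal X d).
Local Notation line := (line d).
Local Notation pos := (pos d).

Lemma same_portal_refl p : In p X -> sp p p.
Proof. intros Hp; repeat split; auto. exists 0%nat; constructor. Qed.

Lemma same_portal_sym p q : sp p q -> sp q p.
Proof.
  intros (Hp & Hq & n & W); repeat split; auto. exists n.
  apply walk_sym; auto. intros a b (Ha & Hb & E); repeat split; auto using tri_edge_sym.
Qed.

Lemma same_portal_trans p q r : sp p q -> sp q r -> sp p r.
Proof.
  intros (Hp & _ & n & W) (_ & Hr & m & W'); repeat split; auto.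
  exists (n + m)%nat; eapply walk_trans; eauto.
Qed.

Lemma same_portal_line p q : sp p q -> line p = line q.
Proof.
  intros (_ & _ & n & W). induction W as [|a b c n (_ & _ & E) _ IH]; auto.
  apply tri_edge_iff in E; lia.
Qed.

Lemma same_portal_of_adj p q : adjX X p q -> line p = line q -> sp p q.
Proof.
  intros (Hp & Hq & Hpq) El; repeat split; auto. exists 1%nat.
  econstructor; [|constructor]. repeat split; auto. apply tri_adj_same_line; auto.
Qed.

Lemma adj_other_portal_line p q :
  adjX X p q -> ~ sp p q -> line q - line p = 1 \/ line q - line p = -1.
Proof.
  intros Hpq Hn. pose proof (tri_adj_offset d p q (proj2 (proj2 Hpq))) as O.
  destruct (Z.eq_dec (line p) (line q)) as [E|E].
  - exfalso; apply Hn, same_portal_of_adj; auto.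
  - unfold step_offset in O; lia.
Qed.

Lemma lower_neighbour_line t a :
  adjX X t a -> ~ sp t a -> line a <= line t ->
  line a = line t - 1 /\ (pos a = pos t \/ pos a = pos t - 1).
Proof.
  intros Hta Nta Le. pose proof (adj_other_portal_line t a Hta Nta).
  pose proof (tri_adj_offset d t a (proj2 (proj2 Hta))) as O. unfold step_offset in O. lia.
Qed.

Lemma same_portal_convex x y k :
  sp x y -> Z.min (pos x) (pos y) <= k <= Z.max (pos x) (pos y) ->
  sp x (vertex_at d (line x) k).
Proof.
  intros (Hx & _ & n & W). revert Hx.
  induction W as [a|a b c n Hab W IH]; intros Ha Hk.
  - replace k with (pos a) by lia. rewrite vertex_at_coords. apply same_portal_refl; auto.
  - pose proof Hab as (_ & Hb & E). apply tri_edge_iff in E.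
    destruct (Z.eq_dec k (pos a)) as [->|Hka].
    + rewrite vertex_at_coords. apply same_portal_refl; auto.
    + apply same_portal_trans with b.
      * repeat split; auto. exists 1%nat; econstructor; [exact Hab | constructor].
      * replace (line a) with (line b) by lia. apply IH; auto; lia.
Qed.

Lemma straight_walk x y :
  line x = line y ->
  (forall k, Z.min (pos x) (pos y) <= k <= Z.max (pos x) (pos y) ->
     In (vertex_at d (line x) k) X) ->
  walk (adjX_d X d) x y (Z.abs_nat (pos y - pos x)).
Proof.
  remember (Z.abs_nat (pos y - pos x)) as n eqn:En. revert x En.
  induction n as [|n IH]; intros x En El Hin;
    pose proof (Zabs2Nat.id_abs (pos y - pos x)) as Abs; rewrite <- En in Abs.
  - rewrite (vertex_eq_coords d x y); [constructor | auto | lia].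
  - set (x' := vertex_at d (line x) (pos x + Z.sgn (pos y - pos x))).
    assert (Lx' : line x' = line x) by apply line_vertex_at.
    assert (Px' : pos x' = pos x + Z.sgn (pos y - pos x)) by apply pos_vertex_at.
    assert (Sg : 0 < pos y - pos x /\ Z.sgn (pos y - pos x) = 1 \/
                 pos y - pos x < 0 /\ Z.sgn (pos y - pos x) = -1).
    { destruct (Z.sgn_spec (pos y - pos x)) as [[? ->]|[[? ->]|[? ->]]]; lia. }
    apply walkS with x'.
    + repeat split.
      * rewrite <- (vertex_at_coords d x). apply Hin; lia.
      * apply Hin; lia.
      * apply tri_edge_iff; lia.
    + apply IH; [apply Nat2Z.inj; rewrite Zabs2Nat.id_abs; lia | lia |].
      intros k Hk. rewrite Lx'. apply Hin. lia.
Qed.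

Lemma same_portal_walk x y : sp x y -> walk (adjX X) x y (Z.abs_nat (pos y - pos x)).
Proof.
  intros Hxy. eapply walk_impl; [|apply straight_walk].
  - intros a b (Ha & Hb & E). repeat split; auto. exists d; exact E.
  - apply same_portal_line; auto.
  - intros k Hk. apply (same_portal_convex x y k Hxy Hk).
Qed.

Lemma portal_gap x y :
  In x X -> In y X -> line x = line y -> ~ sp x y ->
  exists k, Z.min (pos x) (pos y) < k < Z.max (pos x) (pos y) /\
            ~ In (vertex_at d (line x) k) X.
Proof.
  intros Hx Hy El Hn. apply NNPP; intros Hgap. apply Hn.
  repeat split; auto. eexists. apply straight_walk; auto.
  intros k Hk. apply NNPP; intros Hk'.
  destruct (Z.eq_dec k (pos x)) as [->|]; [rewrite vertex_at_coords in Hk'; auto|].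
  destruct (Z.eq_dec k (pos y)) as [->|]; [rewrite El, vertex_at_coords in Hk'; auto|].
  apply Hgap. exists k; split; auto; lia.
Qed.

Lemma same_portal_path x y :
  sp x y -> exists s, path (adjX X) x s /\ path_end x s = y /\ forall z, In z s -> sp x z.
Proof.
  intros Hxy. pose proof Hxy as (Hx & _ & n & W).
  apply walk_iff_path in W as (s & Hs & Es & _). exists s. split; [|split; auto].
  - eapply path_impl; [|exact Hs]. intros a b (Ha & Hb & E). repeat split; auto.
    exists d; exact E.
  - apply (path_inv (adjX_d X d) (sp x) x s); [| apply same_portal_refl; auto | exact Hs].
    intros a b Hxa Hab. apply (same_portal_trans x a); auto.
    pose proof Hab as (Ha & Hb & _). repeat split; auto. exists 1%nat.
    econstructor; [exact Hab | constructor].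
Qed.

End Portals.

(* Whether the edge (lx, px) -- (ly, py) crosses the half-line that leaves (gl, gp)
   towards increasing lines, passing between positions gp and gp + 1. *)
Definition crosses (gl gp lx px ly py : Z) : bool :=
  (px =? gp) && (py =? gp + 1) && (gl <? lx) ||
  (py =? gp) && (px =? gp + 1) && (gl <? ly).

Ltac decide_Z :=
  repeat (match goal with
          | |- context [?a =? ?b] => destruct (Z.eqb_spec a b)
          | |- context [?a <? ?b] => destruct (Z.ltb_spec a b)
          | |- context [?a <=? ?b] => destruct (Z.leb_spec a b)
          end; simpl; try (exfalso; lia)); try reflexivity; try lia.

(* Moving the origin of the half-line by one step changes the crossing parity of
   an edge exactly when the edge crosses the boundary of a thin strip [H]. *)
Lemma crosses_shift gl gp gl' gp' :
  (gl' - gl = 1 /\ gp' = gp) \/ (gl' = gl /\ gp' - gp = 1) \/ (gl' - gl = 1 /\ gp' - gp = 1) ->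
  exists H : Z -> Z -> bool, forall lx px ly py,
    step_offset (ly - lx) (py - px) ->
    ~ (lx = gl /\ px = gp) -> ~ (ly = gl /\ py = gp) ->
    ~ (lx = gl' /\ px = gp') -> ~ (ly = gl' /\ py = gp') ->
    Nat.even (Nat.b2n (crosses gl gp lx px ly py) + Nat.b2n (crosses gl' gp' lx px ly py))
    = Bool.eqb (H lx px) (H ly py).
Proof.
  unfold crosses, step_offset; intros [[El ->]|[[-> Ep]|[El Ep]]];
    [exists (fun _ _ => false) | exists (fun l p => (p =? gp + 1) && (gl <? l))
    | exists (fun l p => (p =? gp + 1) && (gl + 1 <? l))];
    intros lx px ly py O H1 H2 H3 H4;
    destruct O as [[Ol [Op|Op]]|[[Ol [Op|Op]]|[Ol [Op|Op]]]];
    replace ly with (lx + (ly - lx)) by lia; replace py with (px + (py - px)) by lia;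
    rewrite Ol, Op in *; decide_Z.
Qed.

Definition crossing (d : axis) (g x y : vertex) : nat :=
  Nat.b2n (crosses (line d g) (pos d g) (line d x) (pos d x) (line d y) (pos d y)).

Section Parity.
Variables (X : list vertex) (d : axis).
Hypothesis hole_free : no_holes X.

Lemma crossing_along_line g x p :
  line d g < line d x -> (forall z, In z p -> line d z = line d x) -> path (adjX X) x p ->
  Nat.even (sum_steps (crossing d g) x p)
  = Bool.eqb (pos d x <=? pos d g) (pos d (path_end x p) <=? pos d g).
Proof.
  intros Hl Hline Hp. rewrite <- (sum_switches_even (fun z => pos d z <=? pos d g)).
  apply (path_restrict _ (fun z => line d z = line d x)) in Hp; auto.
  revert Hp. apply sum_steps_even_ext.
  intros a b ((_ & _ & Hab) & Ha & Hb). rewrite even_switches.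
  pose proof (tri_adj_offset d a b Hab) as O. unfold step_offset in O.
  unfold crossing, crosses. destruct O as [[Ol [Op|Op]]|[[Ol [Op|Op]]|[Ol [Op|Op]]]]; try lia;
    replace (line d b) with (line d a) by lia;
    replace (pos d b) with (pos d a + (pos d b - pos d a)) by lia; rewrite Op; decide_Z.
Qed.

Lemma sum_crossings_zero g x p :
  (forall z, In z (x :: p) -> pos d z = pos d g -> line d z <= line d g) ->
  path (adjX X) x p -> sum_steps (crossing d g) x p = 0%nat.
Proof.
  intros Hz Hp. apply (path_restrict _ (fun z => pos d z = pos d g -> line d z <= line d g)) in Hp;
    [| apply Hz; left; auto | intros z Hin; apply Hz; right; auto].
  revert Hp. apply sum_steps_zero. intros x' y (_ & Qx & Qy).
  unfold crossing, crosses. decide_Z.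
Qed.

Lemma crossing_parity_shift g g' x p :
  ~ In g X -> ~ In g' X ->
  (line d g' - line d g = 1 /\ pos d g' = pos d g) \/
  (line d g' = line d g /\ pos d g' - pos d g = 1) \/
  (line d g' - line d g = 1 /\ pos d g' - pos d g = 1) ->
  path (adjX X) x p -> path_end x p = x ->
  Nat.even (sum_steps (crossing d g) x p) = Nat.even (sum_steps (crossing d g') x p).
Proof.
  intros Hg Hg' Off Hp Hcl.
  destruct (crosses_shift _ _ _ _ Off) as [H HH].
  assert (Sum : Nat.even (sum_steps (fun a b => crossing d g a b + crossing d g' a b)%nat x p)
                = true).
  { rewrite (sum_steps_even_ext (adjX X) _ (switches (fun z => H (line d z) (pos d z))) x p);
      [| | exact Hp].
    - rewrite sum_switches_even, Hcl. apply eqb_reflx.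
    - intros a b (Ha & Hb & Hab). rewrite even_switches.
      apply HH; [apply tri_adj_offset; exact Hab | ..];
        intros [El Ep]; [apply Hg | apply Hg | apply Hg' | apply Hg'];
        rewrite <- (vertex_eq_coords d _ _ El Ep); assumption. }
  rewrite sum_steps_add, Nat.even_add in Sum.
  destruct (Nat.even (sum_steps (crossing d g) x p)), (Nat.even (sum_steps (crossing d g') x p));
    easy.
Qed.

Lemma closed_path_crossings_even g x p :
  ~ In g X -> path (adjX X) x p -> path_end x p = x ->
  Nat.even (sum_steps (crossing d g) x p) = true.
Proof.
  intros Hg Hp Hcl.
  destruct (list_bound (fun z => Z.abs (pos d z)) X) as [N HN].
  set (g0 := vertex_at d 0 N).
  assert (Hg0 : ~ In g0 X).
  { intros H. specialize (HN g0 H). unfold g0 in HN. rewrite pos_vertex_at in HN. lia. }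
  assert (Far : Nat.even (sum_steps (crossing d g0) x p) = true).
  { rewrite (sum_steps_even_ext (adjX X) _ (switches (fun _ => false)) x p);
      [rewrite sum_switches_even; reflexivity | | exact Hp].
    intros a b (Ha & Hb & _). pose proof (HN a Ha). pose proof (HN b Hb).
    rewrite even_switches. unfold crossing, crosses, g0. rewrite pos_vertex_at. decide_Z. }
  destruct (hole_free g g0 Hg Hg0) as [n W]. rewrite <- Far. clear Far.
  revert Hg Hg0. induction W as [|a b c n (Ha & Hb & Hab) _ IH]; intros Hg Hc; [reflexivity|].
  rewrite <- (IH Hb Hc). pose proof (tri_adj_offset d a b Hab) as O.
  destruct O as [[Ol [Op|Op]]|[[Ol [Op|Op]]|[Ol [Op|Op]]]];
    [| symmetry | | | symmetry | symmetry]; apply crossing_parity_shift; auto; lia.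
Qed.

End Parity.

Section Excursions.
Variables (X : list vertex) (d : axis).
Hypothesis hole_free : no_holes X.
Local Notation sp := (same_portal X d).
Local Notation line := (line d).
Local Notation pos := (pos d).

Lemma excursion_below_same_portal t1 t2 a b m :
  sp t1 t2 -> adjX X t2 a -> adjX X b t1 -> path (adjX X) a m -> path_end a m = b ->
  (forall z, In z (a :: m) -> ~ sp t1 z /\ line z <= line t1) -> sp a b.
Proof.
  intros S12 Ha Hb Hm Em Hz. apply NNPP; intros Nab.
  assert (L2 : line t2 = line t1) by (symmetry; apply (same_portal_line X d); auto).
  destruct (Hz a (or_introl eq_refl)) as [Na La].
  destruct (Hz b) as [Nb Lb]; [rewrite <- Em; apply path_end_in|].
  destruct (lower_neighbour_line X d t2 a Ha) as [La' Pa]; [|lia|].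
  { intros S2a. apply Na, (same_portal_trans X d _ t2); auto. }
  destruct (lower_neighbour_line X d t1 b (adjX_sym _ _ _ Hb) Nb) as [Lb' Pb]; [lia|].
  destruct (portal_gap X d a b) as (gm & Hgm & Hg); try apply Ha; try apply Hb; [lia | auto |].
  set (g := vertex_at d (line a) gm) in Hg.
  assert (Lg : line g = line t1 - 1) by (unfold g; rewrite line_vertex_at; lia).
  assert (Pg : pos g = gm) by apply pos_vertex_at.
  destruct (same_portal_path X d t1 t2 S12) as (S & HS & ES & HSin).
  assert (Loop : path (adjX X) t1 (S ++ a :: m ++ [t1])).
  { apply path_cat; rewrite ES; simpl; rewrite path_cat, Em; simpl; auto. }
  assert (Closed : path_end t1 (S ++ a :: m ++ [t1]) = t1).
  { rewrite path_end_cat, ES; simpl; rewrite path_end_cat; reflexivity. }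
  pose proof (closed_path_crossings_even X d hole_free g t1 _ Hg Loop Closed) as Par.
  rewrite sum_steps_cat, ES in Par; simpl in Par; rewrite sum_steps_cat, Em in Par; simpl in Par.
  (* the portal segment crosses the half-line issued from the gap g once, the rest never *)
  assert (Seg : Nat.even (sum_steps (crossing d g) t1 S) = false).
  { rewrite (crossing_along_line X d), ES; [| lia | | exact HS].
    - rewrite Pg. decide_Z.
    - intros z Hin. symmetry. apply (same_portal_line X d), HSin, Hin. }
  assert (Mid : sum_steps (crossing d g) a m = 0%nat).
  { apply (sum_crossings_zero X d); auto. rewrite Lg, Pg. intros z Hin Ez.
    destruct (Hz z Hin) as [Nz Lz].
    destruct (Z.eq_dec (line z) (line t1)) as [El|]; [exfalso|lia].
    apply Nz. rewrite <- (vertex_eq_coords d (vertex_at d (line t1) gm) z);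
      rewrite ?line_vertex_at, ?pos_vertex_at; auto.
    apply (same_portal_convex X d t1 t2 gm S12). lia. }
  assert (Out : crossing d g t2 a = 0%nat /\ crossing d g b t1 = 0%nat).
  { unfold crossing, crosses. rewrite Lg, Pg. split; decide_Z. }
  destruct Out as [E1 E2]. rewrite E1, E2, Mid, !Nat.add_0_r, Seg in Par. discriminate.
Qed.

(* The part of an excursion before its first visit of a higher portal and the part
   after its last visit, closed up through the lower portal, form an excursion of
   the higher portal lying entirely below it. *)
Lemma excursion_reentry t1 t2 A1 u B A2 :
  sp t1 t2 -> line t1 < line u -> sp u (path_end u B) ->
  path (adjX X) t2 (A1 ++ u :: B ++ A2 ++ [t1]) ->
  (forall z, In z A1 \/ In z A2 -> ~ sp u z /\ line z <= line u) ->
  sp (hd t1 A2) (path_end t2 A1).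
Proof.
  intros S12 Lu Su Hp HA.
  apply path_cat in Hp as [HA1 [Hq Hp]]. apply path_cat in Hp as [HB Hp].
  destruct (same_portal_path X d t1 t2 S12) as (S & HS & ES & HSin).
  assert (Off : forall z, line z < line u -> ~ sp u z /\ line z <= line u).
  { split; [intros Huz; apply (same_portal_line X d) in Huz|]; lia. }
  destruct (A2 ++ [t1]) as [|p R] eqn:ER; [destruct A2; discriminate|].
  assert (Ep : path_end p R = t1).
  { change (path_end (path_end u B) (p :: R) = t1). rewrite <- ER, path_end_cat. reflexivity. }
  replace (hd t1 A2) with p by (destruct A2; injection ER; auto).
  destruct Hp as [Hp HR].
  apply (excursion_below_same_portal u (path_end u B) p (path_end t2 A1) (R ++ S ++ A1)); auto.
  - apply path_cat; rewrite Ep; split; auto. apply path_cat; rewrite ES; auto.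
  - rewrite !path_end_cat, Ep, ES. reflexivity.
  - intros z Hz. change (p :: R ++ S ++ A1) with ((p :: R) ++ S ++ A1) in Hz.
    rewrite <- ER in Hz. apply in_app_or in Hz as [Hz|Hz]; [apply in_app_or in Hz as [Hz|[<-|[]]]|
      apply in_app_or in Hz as [Hz|Hz]]; auto.
    apply Off. rewrite <- (same_portal_line X d t1 z (HSin z Hz)). lia.
Qed.

Definition count_on_line (s : Z) (l : list vertex) : nat :=
  length (filter (fun z => line z =? s) l).

Lemma count_on_line_app s l1 l2 :
  count_on_line s (l1 ++ l2) = (count_on_line s l1 + count_on_line s l2)%nat.
Proof. unfold count_on_line. rewrite filter_app, length_app. reflexivity. Qed.

Lemma count_on_line_eq0 s l : count_on_line s l = 0%nat <-> forall z, In z l -> line z <> s.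
Proof.
  unfold count_on_line. induction l as [|x l IH]; simpl; [tauto|].
  destruct (Z.eqb_spec (line x) s); simpl; rewrite ?IH; [split; [discriminate|] |];
    firstorder congruence.
Qed.

Lemma excursion_shortcut t1 a A1 u B c A2 s :
  path (adjX X) a (A1 ++ u :: B ++ c :: A2) ->
  (forall z, In z (a :: A1 ++ u :: B ++ c :: A2) -> ~ sp t1 z /\ line z <= s) ->
  sp (path_end a A1) c -> line u = s -> line (path_end a A1) <> s ->
  exists m', path (adjX X) a m' /\ path_end a m' = path_end c A2 /\
    (forall z, In z (a :: m') -> ~ sp t1 z /\ line z <= s) /\
    (count_on_line s (a :: m') < count_on_line s (a :: A1 ++ u :: B ++ c :: A2))%nat.
Proof.
  intros Hm Hz Sqc Lu Lq. set (q := path_end a A1) in *.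
  destruct (same_portal_path X d q c Sqc) as (T & HT & ET & HTin).
  apply path_cat in Hm as [HA1 [_ Hm]]. apply path_cat in Hm as [_ [_ HA2]].
  assert (Sub : forall z, In z (a :: A1) \/ In z A2 -> In z (a :: A1 ++ u :: B ++ c :: A2)).
  { intros z [[<-|Hin]|Hin]; [left; auto | right; apply in_or_app; auto |].
    right. apply in_or_app. right. right. apply in_or_app. right. right. exact Hin. }
  destruct (Hz q) as [Nq Lq']; [apply Sub; left; apply path_end_in|].
  assert (HTz : forall z, In z T -> ~ sp t1 z /\ line z = line q).
  { intros z Hin. split.
    - intros Sz. apply Nq, (same_portal_trans X d _ z); [|apply (same_portal_sym X d)]; auto.
    - symmetry. apply (same_portal_line X d), HTin, Hin. }
  exists (A1 ++ T ++ A2). split; [|split; [|split]].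
  - apply path_cat; split; auto. fold q. apply path_cat; rewrite ET; split; auto.
  - rewrite !path_end_cat. fold q. rewrite ET; auto.
  - intros z Hin. change (a :: A1 ++ T ++ A2) with ((a :: A1) ++ T ++ A2) in Hin.
    apply in_app_or in Hin as [Hin|Hin]; [|apply in_app_or in Hin as [Hin|Hin]].
    + apply Hz, Sub; auto.
    + destruct (HTz z Hin); split; auto; lia.
    + apply Hz, Sub; auto.
  - change (a :: A1 ++ T ++ A2) with ((a :: A1) ++ T ++ A2).
    change (a :: A1 ++ u :: B ++ c :: A2) with ((a :: A1) ++ [u] ++ B ++ [c] ++ A2).
    rewrite !count_on_line_app.
    assert (CT : count_on_line s T = 0%nat).
    { apply count_on_line_eq0. intros z Hin. rewrite (proj2 (HTz z Hin)). auto. }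
    assert (Cu : count_on_line s [u] = 1%nat).
    { unfold count_on_line. simpl. rewrite Lu, Z.eqb_refl. reflexivity. }
    lia.
Qed.

Lemma excursion_surgery t1 t2 a b m s y :
  line t1 < s -> sp t1 t2 -> adjX X t2 a -> adjX X b t1 -> path (adjX X) a m ->
  path_end a m = b -> (forall z, In z (a :: m) -> ~ sp t1 z /\ line z <= s) ->
  In y (a :: m) -> line y = s ->
  sp a b \/ exists m', path (adjX X) a m' /\ path_end a m' = b /\
     (forall z, In z (a :: m') -> ~ sp t1 z /\ line z <= s) /\
     (count_on_line s (a :: m') < count_on_line s (a :: m))%nat.
Proof.
  intros Ls S12 Ha Hb Hm Em Hz Hy Ly.
  assert (InX : forall z, In z (a :: m) -> In z X).
  { intros z [<-|Hin]; [apply Ha | apply (adjX_path_in X a m Hm z Hin)]. }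
  destruct (split_first_last (sp y) (a :: m) y Hy (same_portal_refl X d y (InX y Hy)))
    as (A1 & u & B & A2 & E & Su & Su' & HA1 & HA2).
  assert (Sub : forall z, In z A1 \/ In z A2 -> In z (a :: m)).
  { rewrite E; intros z [Hin|Hin]; apply in_or_app; [left|right; right; apply in_or_app]; auto. }
  assert (Luy : line u = line y) by (symmetry; apply (same_portal_line X d); auto).
  assert (Loop : path (adjX X) t2 (A1 ++ u :: B ++ A2 ++ [t1])).
  { replace (A1 ++ u :: B ++ A2 ++ [t1]) with ((a :: m) ++ [t1])
      by (rewrite E, <- app_assoc; simpl; rewrite <- app_assoc; reflexivity).
    apply path_cat; simpl; rewrite Em; auto. }
  assert (Outer : forall z, In z A1 \/ In z A2 -> ~ sp u z /\ line z <= line u).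
  { intros z Hin. split.
    - intros Huz. destruct Hin as [Hin|Hin];
        [apply (HA1 z) | apply (HA2 z)]; auto; apply (same_portal_trans X d _ u); auto.
    - rewrite Luy, Ly. apply Hz, Sub, Hin. }
  pose proof (excursion_reentry t1 t2 A1 u B A2 S12 ltac:(lia)
    (same_portal_trans X d _ _ _ (same_portal_sym X d _ _ Su) Su') Loop Outer) as Re.
  destruct A1 as [|a1 A1'], A2 as [|a2 A2']; simpl in Re.
  - left. rewrite app_nil_r in E. injection E as -> ->. rewrite <- Em.
    apply (same_portal_trans X d _ y); [apply (same_portal_sym X d)|]; auto.
  - exfalso. refine (proj1 (Hz a2 _) _); [apply Sub; right; left; auto|].
    apply (same_portal_trans X d _ t2); [|apply (same_portal_sym X d)]; auto.
  - exfalso. refine (proj1 (Hz (path_end a1 A1') _) _); [apply Sub; left; apply path_end_in|].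
    exact Re.
  - right. injection E as <- ->.
    assert (Lq : line (path_end a A1') <> s).
    { apply path_cat in Hm as [_ [Hqu _]].
      assert (Nqu : ~ sp (path_end a A1') u).
      { intros Squ. apply (HA1 (path_end a A1')); [apply path_end_in|].
        apply (same_portal_trans X d _ u); [|apply (same_portal_sym X d)]; auto. }
      pose proof (adj_other_portal_line X d _ u Hqu Nqu). lia. }
    destruct (excursion_shortcut t1 a A1' u B a2 A2' s) as (m' & Hm' & Em' & Hz' & Hc);
      auto; [apply (same_portal_sym X d); auto | lia |].
    exists m'. repeat split; auto; [|apply Hz'; auto..].
    rewrite Em', <- Em, path_end_cat. simpl. rewrite path_end_cat. reflexivity.
Qed.

Lemma bounded_excursion_same_portal s t1 t2 a b m :
  sp t1 t2 -> adjX X t2 a -> adjX X b t1 -> path (adjX X) a m -> path_end a m = b ->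
  (forall z, In z (a :: m) -> ~ sp t1 z /\ line z <= s) -> sp a b.
Proof.
  intros S12 Ha Hb Hm Em Hz.
  enough (H : forall n k s t1 t2 a b m,
    s - line t1 <= Z.of_nat n -> (count_on_line s (a :: m) <= k)%nat ->
    sp t1 t2 -> adjX X t2 a -> adjX X b t1 -> path (adjX X) a m -> path_end a m = b ->
    (forall z, In z (a :: m) -> ~ sp t1 z /\ line z <= s) -> sp a b).
  { apply (H (Z.to_nat (s - line t1)) (count_on_line s (a :: m)) s t1 t2 a b m); auto; lia. }
  clear - hole_free. induction n as [|n IHn]; intros k; induction k as [|k IHk];
    intros s t1 t2 a b m Hn Hk S12 Ha Hb Hm Em Hz;
    (destruct (Z_le_dec s (line t1)) as [Ls|Ls];
     [apply (excursion_below_same_portal t1 t2 a b m); auto;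
      intros z Hin; destruct (Hz z Hin); split; auto; lia | try lia]).
  all: assert (Lower : (forall z, In z (a :: m) -> line z <> s) -> sp a b)
    by (intros Hs; apply (IHn _ (s - 1) t1 t2 a b m (ltac:(lia)) (le_n _)); auto;
        intros z Hin; destruct (Hz z Hin); specialize (Hs z Hin); split; auto; lia).
  - apply Lower, count_on_line_eq0. lia.
  - destruct (classic (exists y, In y (a :: m) /\ line y = s)) as [(y & Hy & Ly)|None].
    + destruct (excursion_surgery t1 t2 a b m s y) as [|(m' & Hm' & Em' & Hz' & Hc)];
        auto; [lia|].
      apply (IHk s t1 t2 a b m'); auto. lia.
    + apply Lower. intros z Hin Lz. apply None. exists z; auto.
Qed.

Theorem excursion_same_portal t1 t2 a b m :
  sp t1 t2 -> adjX X t2 a -> adjX X b t1 -> path (adjX X) a m -> path_end a m = b ->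
  (forall z, In z (a :: m) -> ~ sp t1 z) -> sp a b.
Proof.
  intros S12 Ha Hb Hm Em Hz. destruct (list_bound line (a :: m)) as [s Hs].
  apply (bounded_excursion_same_portal s t1 t2 a b m); auto.
  intros z Hin. specialize (Hs z Hin). split; auto. lia.
Qed.

End Excursions.

Lemma least_exists (P : nat -> Prop) :
  (exists n, P n) -> exists n, P n /\ forall m, P m -> (n <= m)%nat.
Proof.
  intros H. destruct (dec_inh_nat_subset_has_unique_least_element P (fun n => classic (P n)) H)
    as (n & Hn & _).
  exists n; exact Hn.
Qed.

Definition graph_dist (X : list vertex) (u v : vertex) : nat :=
  epsilon (inhabits 0%nat) (is_dist (adjX X) u v).

Definition portal_dist (X : list vertex) (d : axis) (u v : vertex) : nat :=
  epsilon (inhabits 0%nat) (is_portal_dist X d u v).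

Section PortalWalks.
Variables (X : list vertex) (d : axis).
Local Notation sp := (same_portal X d).
Local Notation line := (line d).

Lemma portal_walk_same_portal w w' v n :
  sp w w' -> portal_walk X d w v n -> portal_walk X d w' v n.
Proof.
  intros Sw (u' & v' & S1 & S2 & W). exists u', v'. split; [|split]; auto.
  apply (same_portal_trans X d _ w); [apply (same_portal_sym X d)|]; auto.
Qed.

Lemma portal_walk_cons w w' v n :
  adjX X w w' -> ~ sp w w' -> portal_walk X d w' v n -> portal_walk X d w v (S n).
Proof.
  intros A N (u' & v' & S1 & S2 & W). pose proof A as (Hw & Hw' & _).
  exists w, v'. split; [apply (same_portal_refl X d); auto|]. split; auto.
  econstructor; [|exact W]. split; [auto|]. split; [apply S1|]. split.
  - intros Su. apply N, (same_portal_trans X d _ u'); [|apply (same_portal_sym X d)]; auto.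
  - exists w, w'. split; [apply (same_portal_refl X d); auto|].
    split; [apply (same_portal_sym X d)|]; auto.
Qed.

Lemma portal_walk_of_walk w v n :
  In v X -> walk (adjX X) w v n -> exists m, portal_walk X d w v m.
Proof.
  intros Hv W. induction W as [a|a b c n A W IH].
  - exists 0%nat, a, a. split; [|split]; try apply (same_portal_refl X d); auto. constructor.
  - destruct (IH Hv) as [m P]. destruct (classic (sp a b)) as [Sab|Sab].
    + exists m. apply (portal_walk_same_portal b); auto. apply (same_portal_sym X d); auto.
    + exists (S m). apply (portal_walk_cons _ b); auto.
Qed.

(* Adjacent portals lie on adjacent lines. *)
Lemma portal_walk_parity w v n :
  portal_walk X d w v n -> exists k, line w - line v + Z.of_nat n = 2 * k.
Proof.
  intros (u' & v' & S1 & S2 & W).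
  rewrite (same_portal_line X d _ _ S1), (same_portal_line X d _ _ S2). clear S1 S2.
  induction W as [a|a b c n P _ [k IH]]; [exists 0; lia|].
  destruct P as (_ & _ & N & p' & q' & Sp & Sq & A).
  assert (N' : ~ sp p' q').
  { intros Spq. apply N, (same_portal_trans X d _ p'); [|apply (same_portal_trans X d _ q')];
      auto; apply (same_portal_sym X d); auto. }
  pose proof (adj_other_portal_line X d p' q' A N') as L.
  rewrite <- (same_portal_line X d _ _ Sp), <- (same_portal_line X d _ _ Sq) in L.
  destruct L; [exists k | exists (k + 1)]; lia.
Qed.

End PortalWalks.

Section Distances.
Variables (X : list vertex) (v : vertex).
Hypotheses (connected : GX_connected X) (hole_free : no_holes X) (Hv : In v X).
Local Notation sp d := (same_portal X d).
Local Notation gd u := (graph_dist X u v).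
Local Notation pd d u := (portal_dist X d u v).

Lemma graph_dist_spec u : In u X -> is_dist (adjX X) u v (gd u).
Proof.
  intros Hu. unfold graph_dist. apply epsilon_spec, least_exists, connected; auto.
Qed.

Lemma graph_dist_le u n : In u X -> walk (adjX X) u v n -> (gd u <= n)%nat.
Proof. intros Hu W. apply (graph_dist_spec u Hu), W. Qed.

Lemma graph_dist_eq0 u : In u X -> gd u = 0%nat -> u = v.
Proof.
  intros Hu E. pose proof (proj1 (graph_dist_spec u Hu)) as W. rewrite E in W.
  inversion W; reflexivity.
Qed.

Lemma graph_dist_succ u k :
  In u X -> gd u = S k -> exists u', adjX X u u' /\ gd u' = k.
Proof.
  intros Hu E. pose proof (graph_dist_spec u Hu) as [W Hmin]. rewrite E in W.
  inversion W as [|? u' ? ? A W']; subst. exists u'. split; auto.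
  pose proof A as (_ & Hu' & _).
  assert (gd u' <= k)%nat by (apply graph_dist_le; auto).
  assert (S (gd u') >= S k)%nat.
  { rewrite <- E. apply Hmin. econstructor; [exact A | apply (graph_dist_spec u' Hu')]. }
  lia.
Qed.

Lemma portal_dist_spec d u : In u X -> is_portal_dist X d u v (pd d u).
Proof.
  intros Hu. unfold portal_dist. apply epsilon_spec, least_exists.
  destruct (connected u v Hu Hv) as [n W]. apply (portal_walk_of_walk X d u v n Hv W).
Qed.

Lemma portal_dist_le d u n : In u X -> portal_walk X d u v n -> (pd d u <= n)%nat.
Proof. intros Hu P. apply (portal_dist_spec d u Hu), P. Qed.

Lemma portal_dist_same_portal d u u' : sp d u u' -> pd d u = pd d u'.
Proof.
  intros Suu'. pose proof Suu' as (Hu & Hu' & _). apply Nat.le_antisymm; apply portal_dist_le; auto.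
  - apply (portal_walk_same_portal X d u'); [apply (same_portal_sym X d); auto|].
    apply portal_dist_spec; auto.
  - apply (portal_walk_same_portal X d u); auto. apply portal_dist_spec; auto.
Qed.

Lemma portal_dist_adj d u u' :
  adjX X u u' -> ~ sp d u u' -> pd d u = S (pd d u') \/ pd d u' = S (pd d u).
Proof.
  intros A N. pose proof A as (Hu & Hu' & _).
  assert (pd d u <= S (pd d u'))%nat.
  { apply portal_dist_le, (portal_walk_cons X d _ u'); auto. apply portal_dist_spec; auto. }
  assert (pd d u' <= S (pd d u))%nat.
  { apply portal_dist_le, (portal_walk_cons X d _ u); auto; [apply adjX_sym; auto| |].
    - intros Su'u. apply N, (same_portal_sym X d); auto.
    - apply portal_dist_spec; auto. }
  pose proof (portal_walk_parity X d u v _ (proj1 (portal_dist_spec d u Hu))) as P.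
  pose proof (portal_walk_parity X d u' v _ (proj1 (portal_dist_spec d u' Hu'))) as P'.
  pose proof (adj_other_portal_line X d u u' A N) as L.
  destruct P as [k P], P' as [k' P']. lia.
Qed.

Lemma portal_dist_eq0 d u : In u X -> pd d u = 0%nat <-> sp d u v.
Proof.
  intros Hu. split.
  - intros E. destruct (proj1 (portal_dist_spec d u Hu)) as (u' & v' & S1 & S2 & W).
    rewrite E in W. inversion W; subst.
    apply (same_portal_trans X d _ v'); [|apply (same_portal_sym X d)]; auto.
  - intros Suv. rewrite (portal_dist_same_portal d u v Suv).
    assert (pd d v <= 0)%nat; [|lia]. apply portal_dist_le; auto.
    exists v, v. split; [|split]; try apply (same_portal_refl X d); auto. constructor.
Qed.

Lemma portal_dist_descent d n u :
  In u X -> (pd d u <= n)%nat ->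
  exists k, walk (fun x y => adjX X x y /\ (pd d x <= n)%nat /\ (pd d y <= n)%nat) u v k.
Proof.
  assert (Within : forall n u w, sp d u w -> (pd d u <= n)%nat ->
    exists k, walk (fun x y => adjX X x y /\ (pd d x <= n)%nat /\ (pd d y <= n)%nat) u w k).
  { intros m x w Sxw Hx. destruct (same_portal_path X d x w Sxw) as (p & Hp & Ep & Hin).
    apply (path_restrict _ (fun z => pd d z <= m)%nat) in Hp; auto;
      [|intros z Hz; rewrite <- (portal_dist_same_portal d x z (Hin z Hz)); auto].
    exists (length p). apply walk_iff_path. eauto. }
  revert u. induction n as [|n IH]; intros u Hu Hn;
    (destruct (pd d u) as [|j] eqn:Ej; [apply Within; [apply portal_dist_eq0|]; auto; lia|]).
  - lia.
  - destruct (proj1 (portal_dist_spec d u Hu)) as (u0 & v' & S0 & Sv & W). rewrite Ej in W.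
    inversion W as [|? x ? ? P W']; subst.
    destruct P as (_ & _ & _ & p' & q' & Sp & Sq & A).
    assert (Hq : (pd d q' <= n)%nat).
    { apply (Nat.le_trans _ j); [|lia]. apply portal_dist_le; [apply A|].
      exists x, v'. split; [apply (same_portal_sym X d)|]; auto. }
    destruct (IH q' (proj1 (proj2 A)) Hq) as [k2 W2].
    destruct (Within (S n) u p') as [k1 W1]; [apply (same_portal_trans X d _ u0); auto | lia|].
    exists (k1 + S k2)%nat. apply walk_trans with p'; [exact W1|].
    econstructor.
    + split; [exact A|]. split; [|lia].
      rewrite <- (portal_dist_same_portal d u p'); [lia|].
      apply (same_portal_trans X d _ u0); auto.
    + eapply walk_impl; [|exact W2]. intros a b (Aab & Ha & Hb). split; [exact Aab | lia].
Qed.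

(* Two such neighbours are joined by a walk through vertices closer to v, hence outside
   the portal of w: an excursion from that portal. *)
Lemma closer_neighbours_same_portal d a b w c :
  adjX X a b -> ~ sp d a b -> sp d b w -> adjX X w c -> ~ sp d w c ->
  S (pd d a) = pd d w -> S (pd d c) = pd d w -> sp d c a.
Proof.
  intros Aab Nab Sbw Awc Nwc Ea Ec.
  set (n := pred (pd d w)).
  destruct (portal_dist_descent d n a) as [k1 W1]; [apply Aab | lia |].
  destruct (portal_dist_descent d n c) as [k2 W2]; [apply Awc | lia |].
  apply walk_sym in W1; [|intros x y (Axy & Hx & Hy); split; [apply adjX_sym|]; auto].
  pose proof (walk_trans _ _ _ _ _ _ W2 W1) as W.
  apply walk_iff_path in W as (l & Hl & El & _).
  apply (excursion_same_portal X d hole_free b w c a l); auto.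
  - eapply path_impl; [|exact Hl]. intros x y H; apply H.
  - assert (Low : forall z, In z (c :: l) -> (pd d z <= n)%nat).
    { intros z [<-|Hz]; [lia|].
      apply (path_inv (fun x y => adjX X x y /\ (pd d x <= n)%nat /\ (pd d y <= n)%nat)
        (fun z => (pd d z <= n)%nat) c l) with (z := z); auto; [|lia].
      intros x y _ (_ & _ & Hy); exact Hy. }
    intros z Hz Sbz. specialize (Low z Hz).
    rewrite <- (portal_dist_same_portal d b z Sbz), (portal_dist_same_portal d b w Sbw) in Low.
    lia.
Qed.

Lemma geodesic_portal_exit d u :
  In u X -> ~ sp d u v ->
  exists w c, sp d u w /\ adjX X w c /\ ~ sp d w c /\ S (gd c) = gd w /\
    Z.of_nat (gd w) + Z.abs (pos d w - pos d u) <= Z.of_nat (gd u).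
Proof.
  remember (gd u) as k eqn:Ek. revert u Ek. induction k as [|k IH]; intros u Ek Hu Nuv.
  - exfalso. apply Nuv. rewrite (graph_dist_eq0 u Hu (eq_sym Ek)).
    apply (same_portal_refl X d); auto.
  - destruct (graph_dist_succ u k Hu (eq_sym Ek)) as (u' & A & E').
    pose proof A as (_ & Hu' & Tuu').
    destruct (classic (sp d u u')) as [Suu'|Nuu'].
    + destruct (IH u' (eq_sym E') Hu') as (w & c & Sw & Awc & Nwc & Ec & Ineq).
      { intros Su'v. apply Nuv, (same_portal_trans X d _ u'); auto. }
      exists w, c. split; [apply (same_portal_trans X d _ u'); auto|].
      do 3 (split; [assumption|]).
      pose proof (tri_adj_offset d u u' Tuu') as O. unfold step_offset in O. lia.
    + exists u, u'. split; [apply (same_portal_refl X d); auto|].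
      do 2 (split; [assumption|]). split; lia.
Qed.

Lemma geodesic_step_portal_dist d u u' :
  adjX X u u' -> S (gd u') = gd u -> ~ sp d u u' -> pd d u = S (pd d u').
Proof.
  enough (H : forall n u u', (gd u <= n)%nat ->
    adjX X u u' -> S (gd u') = gd u -> ~ sp d u u' -> pd d u = S (pd d u')) by eauto.
  clear u u'. induction n as [|n IH]; intros u u' Hn A Eu N; [lia|].
  pose proof A as (Hu & Hu' & Tuu').
  destruct (portal_dist_adj d u u' A N) as [|Up]; [assumption | exfalso].
  destruct (classic (sp d u' v)) as [Sv|Nv].
  { apply portal_dist_eq0 in Sv; auto. lia. }
  destruct (geodesic_portal_exit d u' Hu' Nv) as (w & c & Sw & Awc & Nwc & Ec & Ineq).
  pose proof Awc as (Hw & Hc & Twc).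
  assert (Step : pd d w = S (pd d c)) by (apply (IH w c); auto; lia).
  pose proof (portal_dist_same_portal d u' w Sw) as Ew.
  assert (Scu : sp d c u) by (apply (closer_neighbours_same_portal d u u' w c); auto; lia).
  (* the straight segment from u to c is shorter than the detour u, u', ..., w, c, since
     the steps u u' and w c between the two lines gain at most one position together *)
  assert (Short : (gd u <= Z.abs_nat (pos d c - pos d u) + gd c)%nat).
  { apply graph_dist_le; auto. apply walk_trans with c.
    - apply same_portal_walk, (same_portal_sym X d); auto.
    - apply graph_dist_spec; auto. }
  pose proof (same_portal_line X d _ _ Scu). pose proof (same_portal_line X d _ _ Sw).
  pose proof (adj_other_portal_line X d u u' A N).
  pose proof (tri_adj_offset d u u' Tuu') as O1. pose proof (tri_adj_offset d w c Twc) as O2.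
  unfold step_offset in O1, O2. pose proof (Zabs2Nat.id_abs (pos d c - pos d u)). lia.
Qed.

Lemma portal_dists_sum n u :
  In u X -> gd u = n -> (pd AxX u + pd AxY u + pd AxZ u = 2 * n)%nat.
Proof.
  revert u. induction n as [|n IH]; intros u Hu En.
  - rewrite (graph_dist_eq0 u Hu En).
    rewrite !(proj2 (portal_dist_eq0 _ v Hv)); auto; apply (same_portal_refl X); auto.
  - destruct (graph_dist_succ u n Hu En) as (u' & A & E').
    pose proof A as (_ & Hu' & e & Te).
    assert (Along : forall d, d = e -> pd d u = pd d u').
    { intros d ->. apply portal_dist_same_portal, (same_portal_of_adj X e); auto.
      symmetry. apply tri_edge_iff, Te. }
    assert (Across : forall d, d <> e -> pd d u = S (pd d u')).
    { intros d Hd. apply geodesic_step_portal_dist; auto; [lia|].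
      intros Suu'. apply (same_portal_line X d) in Suu'.
      pose proof (tri_edge_other_axis e d u u' Te ltac:(auto)). lia. }
    specialize (IH u' Hu' E').
    destruct e; rewrite (Along _ eq_refl), !Across by discriminate; lia.
Qed.

End Distances.

Theorem mainTheorem3 (X : list vertex) :
  GX_connected X -> no_holes X ->
  forall u v, In u X -> In v X ->
  exists n nx ny nz : nat,
    is_dist (adjX X) u v n /\
    is_portal_dist X AxX u v nx /\
    is_portal_dist X AxY u v ny /\
    is_portal_dist X AxZ u v nz /\
    (2 * n = nx + ny + nz)%nat.
Proof.
  intros connected hole_free u v Hu Hv.
  exists (graph_dist X u v), (portal_dist X AxX u v), (portal_dist X AxY u v),
    (portal_dist X AxZ u v).
  repeat split; try apply graph_dist_spec; try apply portal_dist_spec; auto.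
  rewrite (portal_dists_sum X v connected hole_free Hv (graph_dist X u v) u Hu eq_refl). lia.
Qed.
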